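(* Let $\mu_e>0,\sigma^2>0$ and consider any modular federating method (defined in the context). Then: (1) For any coalition $C$ and any two players $s,l\in C$ with $n_s\le n_l$, the smaller player's error is at least the larger player's: $err_s(C)\ge err_l(C)$, strictly if $n_s<n_l$. (2) For any $c>0$, any coalition $C$ in which the largest player has at most $c\cdot\frac{\mu_e}{\sigma^2}$ samples satisfies $(2c+1)$-egalitarian fairness, i.e. $\frac{err_i(C)}{err_j(C)}\le 2c+1$ for all $i,j\in C$. (3) This bound is tight up to an additive $\epsilon$: for every $c>0$ and every $\epsilon>0$ there exist parameters $\mu_e,\sigma^2>0$ and sample sizes $n_s\ge1$, $n_l\le c\cdot\frac{\mu_e}{\sigma^2}$ such that $\frac{err_s(\{s,l\})}{err_l(\{s,l\})}\ge 2c+1-\epsilon$.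
   Context: Players $i$ each have a number of samples $n_i>0$. A federating method assigns to each coalition (set of players) $C$ and each player $j\in C$ an error $err_j(C)>0$, depending on the sample sizes of the players in $C$ and on parameters $\mu_e>0$ (average sampling noise) and $\sigma^2>0$ (variance of players' true parameters). For two players $s,l$ write $err_s(\{n_s,n_l\})$, $err_l(\{n_s,n_l\})$ for their errors in the two-player coalition $\{s,l\}$, viewed as functions of $n_s,n_l$. A federating method is modular if for every coalition $C$ and players $s,l\in C$ with $n_s\le n_l$: (P1) $\frac{err_s(C)}{err_l(C)}\ge1$, with $err_s(C)>err_l(C)$ if $n_s<n_l$; (P2) $\frac{err_s(C)}{err_l(C)}\le\frac{err_s(\{n_s,n_l\})}{err_l(\{n_s,n_l\})}$; (P3) $\frac{\partial}{\partial n_l}\frac{err_s(\{n_s,n_l\})}{err_l(\{n_s,n_l\})}\ge0$; (P4) $\frac{\partial}{\partial n_s}\frac{err_s(\{n_s,n_l\})}{err_l(\{n_s,n_l\})}\le0$; (P5) $\lim_{n_s/n_l\to0}\frac{err_s(\{n_s,n_l\})}{err_l(\{n_s,n_l\})}=\frac{\mu_e/n_l+2\sigma^2}{\mu_e/n_l}$. A coalition $C$ satisfies $\lambda$-egalitarian fairness ($\lambda\ge1$) if $err_i(C)/err_j(C)\le\lambda$ for all $i,j\in C$. *)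

From Stdlib Require Import Reals List.
From Coquelicot Require Import Coquelicot.
Open Scope R_scope.

(* A federating method: given mu_e, sigma^2, the list of sample sizes of the
   players of a coalition C (player j of C has sample size nth j ns 0), and the
   index j of a player in C, returns err_j(C). *)
Definition method := R -> R -> list R -> nat -> R.

Definition size_of (ns : list R) (i : nat) : R := nth i ns 0.

Definition pos_sizes (ns : list R) : Prop :=
  forall i, (i < length ns)%nat -> 0 < size_of ns i.

Definition federating_method (err : method) : Prop :=
  forall mu sig2 ns j, 0 < mu -> 0 < sig2 -> pos_sizes ns ->
    (j < length ns)%nat -> 0 < err mu sig2 ns j.

(* err_s({n_s,n_l}) / err_l({n_s,n_l}) as a function of n_s = x, n_l = y *)
Definition pair_ratio (err : method) (mu sig2 x y : R) : R :=
  err mu sig2 (x :: y :: nil) 0%nat / err mu sig2 (x :: y :: nil) 1%nat.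

Definition modular_P1 (err : method) (mu sig2 : R) : Prop :=
  forall ns s l, pos_sizes ns -> (s < length ns)%nat -> (l < length ns)%nat ->
    size_of ns s <= size_of ns l ->
    err mu sig2 ns s / err mu sig2 ns l >= 1 /\
    (size_of ns s < size_of ns l -> err mu sig2 ns s > err mu sig2 ns l).

Definition modular_P2 (err : method) (mu sig2 : R) : Prop :=
  forall ns s l, pos_sizes ns -> (s < length ns)%nat -> (l < length ns)%nat ->
    size_of ns s <= size_of ns l ->
    err mu sig2 ns s / err mu sig2 ns l
      <= pair_ratio err mu sig2 (size_of ns s) (size_of ns l).

Definition modular_P3 (err : method) (mu sig2 : R) : Prop :=
  forall x y, 0 < x -> x <= y ->
    ex_derive (fun t => pair_ratio err mu sig2 x t) y /\
    0 <= Derive (fun t => pair_ratio err mu sig2 x t) y.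

Definition modular_P4 (err : method) (mu sig2 : R) : Prop :=
  forall x y, 0 < x -> x <= y ->
    ex_derive (fun t => pair_ratio err mu sig2 t y) x /\
    Derive (fun t => pair_ratio err mu sig2 t y) x <= 0.

(* P5: the limit as n_s/n_l -> 0, holding fixed the quantities the limit
   value is expressed in, namely mu_e/n_l (= a) and sigma^2. *)
Definition modular_P5 (err : method) : Prop :=
  forall a sig2, 0 < a -> 0 < sig2 ->
  forall eps, 0 < eps -> exists delta, 0 < delta /\
    forall ns nl, 0 < ns -> 0 < nl -> ns / nl < delta ->
      Rabs (pair_ratio err (a * nl) sig2 ns nl
            - ((a * nl) / nl + 2 * sig2) / ((a * nl) / nl)) < eps.

Definition modular (err : method) : Prop :=
  (forall mu sig2, 0 < mu -> 0 < sig2 ->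
     modular_P1 err mu sig2 /\ modular_P2 err mu sig2 /\
     modular_P3 err mu sig2 /\ modular_P4 err mu sig2) /\
  modular_P5 err.

Definition egalitarian_fair (err : method) (mu sig2 lam : R) (ns : list R) : Prop :=
  forall i j, (i < length ns)%nat -> (j < length ns)%nat ->
    err mu sig2 ns i / err mu sig2 ns j <= lam.

(* Within a coalition the ratio err_s/err_l is dominated by the two-player ratio (P2), which
   grows with n_l (P3) and shrinks with n_s (P4). Raising n_l to the cap Y = c mu_e/sigma^2 and
   letting n_s tend to 0 bounds it by the P5 limit 1 + 2 sigma^2 Y/mu_e = 2c + 1. Conversely,
   choosing mu_e proportional to n_l keeps the P5 limit at 2c + 1 while n_s/n_l -> 0, which
   shows the bound is approached. *)
From Stdlib Require Import Reals List Lra.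
From Coquelicot Require Import Coquelicot.
Open Scope R_scope.

Lemma Derive_nonneg_le (f : R -> R) (a b : R) : a <= b ->
  (forall t, a <= t <= b -> ex_derive f t /\ 0 <= Derive f t) -> f a <= f b.
Proof.
  intros Hab Hf.
  destruct (MVT_gen f a b (Derive f)) as [c [Hc Hmvt]];
    rewrite ?Rmin_left, ?Rmax_right in * by lra.
  - intros t Ht; apply Derive_correct, Hf; lra.
  - intros t Ht; apply continuity_pt_filterlim,
      (ex_derive_continuous (K := R_AbsRing) (V := R_NormedModule)), Hf; lra.
  - assert (0 <= Derive f c) by (apply Hf; lra). nra.
Qed.

Lemma Derive_nonpos_ge (f : R -> R) (a b : R) : a <= b ->
  (forall t, a <= t <= b -> ex_derive f t /\ Derive f t <= 0) -> f b <= f a.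
Proof.
  intros Hab Hf.
  enough (- f a <= - f b) by lra.
  apply (Derive_nonneg_le (fun t => - f t)); [exact Hab|].
  intros t Ht; destruct (Hf t Ht) as [Hex Hle].
  split.
  - now apply (ex_derive_opp (K := R_AbsRing) (V := R_NormedModule)).
  - rewrite Derive_opp; lra.
Qed.

Lemma le_lim_right_of_antitone (g : R -> R) (L x : R) : 0 < x ->
  (forall t, 0 < t <= x -> g x <= g t) ->
  (forall eps, 0 < eps -> exists d, 0 < d /\ forall t, 0 < t < d -> Rabs (g t - L) < eps) ->
  g x <= L.
Proof.
  intros Hx Hanti Hlim.
  apply Rnot_lt_le; intros HLx.
  destruct (Hlim (g x - L)) as [d [Hd Hclose]]; [lra|].
  set (t := Rmin x (d / 2)).
  assert (Ht : 0 < t <= x) by (split; [apply Rmin_pos | apply Rmin_l]; lra).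
  assert (Htd : t < d) by (unfold t; pose proof (Rmin_r x (d / 2)); lra).
  specialize (Hclose t (conj (proj1 Ht) Htd)).
  specialize (Hanti t Ht).
  apply Rabs_def2 in Hclose; lra.
Qed.

Lemma modular_P5_lim (err : method) : modular_P5 err ->
  forall a sig2, 0 < a -> 0 < sig2 ->
  forall eps, 0 < eps -> exists d, 0 < d /\
    forall x y, 0 < x -> 0 < y -> x / y < d ->
      Rabs (pair_ratio err (a * y) sig2 x y - (1 + 2 * sig2 / a)) < eps.
Proof.
  intros H5 a sig2 Ha Hs eps Heps.
  destruct (H5 a sig2 Ha Hs eps Heps) as [d [Hd Hclose]].
  exists d; split; [exact Hd|].
  intros x y Hx Hy Hxy.
  replace (1 + 2 * sig2 / a) with ((a * y / y + 2 * sig2) / (a * y / y)) by (field; lra).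
  now apply Hclose.
Qed.

Section FixedParameters.

Variables (err : method) (mu sig2 : R).
Hypotheses (mu_gt0 : 0 < mu) (sig2_gt0 : 0 < sig2).

Lemma err_le_of_size_le : federating_method err -> modular_P1 err mu sig2 ->
  forall ns s l, pos_sizes ns -> (s < length ns)%nat -> (l < length ns)%nat ->
    size_of ns s <= size_of ns l -> err mu sig2 ns l <= err mu sig2 ns s.
Proof.
  intros Hfed H1 ns s l Hpos Hs Hl Hsl.
  assert (Herr_l : 0 < err mu sig2 ns l) by now apply Hfed.
  destruct (H1 ns s l Hpos Hs Hl Hsl) as [Hratio _].
  apply Rge_le, (proj2 (Rle_div_r 1 _ _ Herr_l)) in Hratio; lra.
Qed.

Lemma pair_ratio_le_P5_bound (Y x y : R) :
  modular_P3 err mu sig2 -> modular_P4 err mu sig2 -> modular_P5 err ->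
  0 < x <= y -> y <= Y -> pair_ratio err mu sig2 x y <= 1 + 2 * sig2 * Y / mu.
Proof.
  intros H3 H4 H5 Hxy HyY.
  assert (Hgrow : pair_ratio err mu sig2 x y <= pair_ratio err mu sig2 x Y).
  { apply (Derive_nonneg_le (fun t => pair_ratio err mu sig2 x t)); [exact HyY|].
    intros t Ht; apply H3; lra. }
  eapply Rle_trans; [exact Hgrow|].
  apply (le_lim_right_of_antitone (fun t => pair_ratio err mu sig2 t Y)); [lra | |].
  - intros t Ht.
    apply (Derive_nonpos_ge (fun t => pair_ratio err mu sig2 t Y)); [lra|].
    intros u Hu; apply H4; lra.
  - intros eps Heps.
    assert (Ha : 0 < mu / Y) by (apply Rdiv_lt_0_compat; lra).
    destruct (modular_P5_lim err H5 (mu / Y) sig2 Ha sig2_gt0 eps Heps) as [d [Hd Hclose]].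
    exists (d * Y); split; [nra|].
    intros t Ht.
    replace mu with (mu / Y * Y) at 1 by (field; lra).
    replace (1 + 2 * sig2 * Y / mu) with (1 + 2 * sig2 / (mu / Y)) by (field; lra).
    apply Hclose; [lra | lra |].
    apply Rlt_div_l; lra.
Qed.

Lemma egalitarian_fair_of_size_cap (c : R) : federating_method err ->
  modular_P1 err mu sig2 -> modular_P2 err mu sig2 -> modular_P3 err mu sig2 ->
  modular_P4 err mu sig2 -> modular_P5 err -> 0 < c ->
  forall ns, pos_sizes ns ->
    (forall i, (i < length ns)%nat -> size_of ns i <= c * (mu / sig2)) ->
    egalitarian_fair err mu sig2 (2 * c + 1) ns.
Proof.
  intros Hfed H1 H2 H3 H4 H5 Hc ns Hpos Hcap i j Hi Hj.
  destruct (Rle_lt_dec (size_of ns i) (size_of ns j)) as [Hij | Hji].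
  - eapply Rle_trans; [now apply H2|].
    replace (2 * c + 1) with (1 + 2 * sig2 * (c * (mu / sig2)) / mu) by (field; lra).
    apply pair_ratio_le_P5_bound; [assumption .. | split | now apply Hcap].
    + now apply Hpos.
    + exact Hij.
  - apply Rle_trans with 1; [|lra].
    assert (Herr_j : 0 < err mu sig2 ns j) by now apply Hfed.
    apply (Rdiv_le_1 _ _ Herr_j).
    apply (err_le_of_size_le Hfed H1); auto; lra.
Qed.

End FixedParameters.

Lemma pair_ratio_approaches_cap (err : method) : modular_P5 err ->
  forall c eps, 0 < c -> 0 < eps ->
  exists mu sig2 ns nl, 0 < mu /\ 0 < sig2 /\ 1 <= ns /\ ns <= nl /\
    nl <= c * (mu / sig2) /\ pair_ratio err mu sig2 ns nl >= 2 * c + 1 - eps.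
Proof.
  intros H5 c eps Hc Heps.
  assert (Ha : 0 < / c) by now apply Rinv_0_lt_compat.
  destruct (modular_P5_lim err H5 (/ c) 1 Ha Rlt_0_1 eps Heps) as [d [Hd Hclose]].
  set (nl := 1 + / d).
  assert (Hnl : 1 <= nl) by (unfold nl; pose proof (Rinv_0_lt_compat d Hd); lra).
  assert (Hsmall : 1 / nl < d).
  { apply Rlt_div_l; [lra|].
    replace (d * nl) with (d + 1) by (unfold nl; field; lra); lra. }
  specialize (Hclose 1 nl Rlt_0_1 ltac:(lra) Hsmall).
  replace (1 + 2 * 1 / / c) with (2 * c + 1) in Hclose by (field; lra).
  apply Rabs_def2 in Hclose.
  exists (/ c * nl), 1, 1, nl.
  repeat split; try lra.
  - apply Rmult_lt_0_compat; lra.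
  - right; field; lra.
Qed.

Theorem theorem4p2 (err : method) :
  federating_method err -> modular err ->
  (* (1) *)
  (forall mu sig2, 0 < mu -> 0 < sig2 ->
   forall ns s l, pos_sizes ns -> (s < length ns)%nat -> (l < length ns)%nat ->
     size_of ns s <= size_of ns l ->
     err mu sig2 ns s >= err mu sig2 ns l /\
     (size_of ns s < size_of ns l -> err mu sig2 ns s > err mu sig2 ns l)) /\
  (* (2) *)
  (forall mu sig2, 0 < mu -> 0 < sig2 ->
   forall c, 0 < c ->
   forall ns, pos_sizes ns ->
     (forall i, (i < length ns)%nat -> size_of ns i <= c * (mu / sig2)) ->
     egalitarian_fair err mu sig2 (2 * c + 1) ns) /\
  (* (3) *)
  (forall c eps, 0 < c -> 0 < eps ->
   exists mu sig2 ns nl, 0 < mu /\ 0 < sig2 /\ 1 <= ns /\ ns <= nl /\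
     nl <= c * (mu / sig2) /\
     pair_ratio err mu sig2 ns nl >= 2 * c + 1 - eps).
Proof.
  intros Hfed [Hmod H5].
  split; [|split].
  - intros mu sig2 Hmu Hsig ns s l Hpos Hs Hl Hsl.
    destruct (Hmod mu sig2 Hmu Hsig) as [H1 _].
    split; [apply Rle_ge, (err_le_of_size_le err mu sig2 Hmu Hsig Hfed H1); assumption|].
    now apply (H1 ns s l).
  - intros mu sig2 Hmu Hsig c Hc.
    destruct (Hmod mu sig2 Hmu Hsig) as [H1 [H2 [H3 H4]]].
    now apply egalitarian_fair_of_size_cap.
  - exact (pair_ratio_approaches_cap err H5).
Qed.
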